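(* Let $G$ be a trigraph with underlying simple graph $H$. If $\operatorname{stww}(G)>\Delta(G)^2$, then $\operatorname{tww}(G)=\operatorname{tww}(H)$.
   Context: A trigraph is a finite simple graph whose edges are each colored red or black; a graph is viewed as a trigraph with all edges black, and the underlying simple graph of a trigraph forgets the colors. $\Delta(G)$ denotes the maximum degree of the underlying graph. The red degree of a vertex is the number of red edges incident to it. For a partition $\mathcal{P}$ of $V(G)$, the quotient trigraph $G/\mathcal{P}$ has vertex set $\mathcal{P}$; two distinct parts $U,W$ are joined by a black edge if every pair $\{u,w\}$ with $u\in U,w\in W$ is a black edge of $G$, are non-adjacent if no such pair is an edge, and are joined by a red edge otherwise. A contraction sequence of an $n$-vertex trigraph $G$ is a sequence $\mathcal{P}_n,\dots,\mathcal{P}_1$ of partitions of $V(G)$ where $\mathcal{P}_n$ is the partition into singletons and each $\mathcal{P}_i$ arises from $\mathcal{P}_{i+1}$ by merging two parts; its width is the maximum red degree over all $G/\mathcal{P}_i$, and $\operatorname{tww}(G)$ is the minimum width of a contraction sequence. The sparse twin-width is $\operatorname{stww}(G)\coloneqq\operatorname{tww}(G_{\mathrm{red}})$, where $G_{\mathrm{red}}$ is obtained from $G$ by coloring all edges red. *)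

From mathcomp Require Import all_boot.
Set Implicit Arguments. Unset Strict Implicit. Unset Printing Implicit Defensive.

Section Trigraphs.
Variable V : finType.

(* A trigraph on vertex set V: [bl x y] = black edge, [rd x y] = red edge.
   Edges (of either colour) form a simple graph: symmetric, irreflexive,
   and each edge has exactly one colour. *)
Definition trigraph (bl rd : rel V) : Prop :=
  [/\ symmetric bl, symmetric rd, irreflexive bl, irreflexive rd
    & forall x y, ~~ (bl x y && rd x y)].

Definition adj (bl rd : rel V) : rel V := fun x y => bl x y || rd x y.

Definition Delta (bl rd : rel V) : nat :=
  \max_(x : V) #|[set y | adj bl rd x y]|.

(* the trigraph with all edges red, and the underlying graph (all black) *)
Definition red_bl (bl rd : rel V) : rel V := fun _ _ => false.
Definition red_rd (bl rd : rel V) : rel V := adj bl rd.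
Definition und_bl (bl rd : rel V) : rel V := adj bl rd.
Definition und_rd (bl rd : rel V) : rel V := fun _ _ => false.

(* quotient trigraph G/P: two distinct parts U, W are joined by a red edge
   unless all pairs are black edges or no pair is an edge *)
Definition all_black (bl rd : rel V) (U W : {set V}) : bool :=
  [forall u in U, forall w in W, bl u w].
Definition non_adj (bl rd : rel V) (U W : {set V}) : bool :=
  [forall u in U, forall w in W, ~~ adj bl rd u w].
Definition red_part (bl rd : rel V) (U W : {set V}) : bool :=
  ~~ all_black bl rd U W && ~~ non_adj bl rd U W.

Definition red_deg (bl rd : rel V) (P : {set {set V}}) (U : {set V}) : nat :=
  #|[set W in P | (W != U) && red_part bl rd U W]|.

Definition part_width (bl rd : rel V) (P : {set {set V}}) : nat :=
  \max_(U in P) red_deg bl rd P U.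

Definition singletons : {set {set V}} := [set [set x] | x : V].

Definition merge_step (P Q : {set {set V}}) : bool :=
  [exists U in P, exists W in P,
     (U != W) && (Q == (P :\ U :\ W) :|: [set U :|: W])].

(* a contraction sequence P_n, ..., P_1 (n = #|V|), listed from P_n *)
Definition contraction_seq (t : #|V|.-tuple {set {set V}}) : bool :=
  match tval t with
  | [::] => true
  | P :: s => (P == singletons) && path merge_step P s
  end.

Definition seq_width (bl rd : rel V) (t : #|V|.-tuple {set {set V}}) : nat :=
  \max_(P <- tval t) part_width bl rd P.

(* twin-width: minimum width over all contraction sequences.  The default
   #|V| of the minimum is harmless: every width is at most #|V| - 1 and
   contraction sequences always exist. *)
Definition tww (bl rd : rel V) : nat :=
  \big[minn/#|V|]_(t : #|V|.-tuple {set {set V}} | contraction_seq t)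
     seq_width bl rd t.

Definition stww (bl rd : rel V) : nat := tww (red_bl bl rd) (red_rd bl rd).

End Trigraphs.

From mathcomp Require Import all_boot all_order.
Import Order.TTheory.

Set Implicit Arguments.
Unset Strict Implicit.
Unset Printing Implicit Defensive.

(* Call W a neighbouring part of U in G/P if some edge of G joins U and W.
   If some neighbouring part W is completely joined to U, then U lies in the
   neighbourhood of any w in W, so |U| <= Delta and U has at most Delta^2
   neighbouring parts.  Consequently, in G/P and in H/P alike, a part with more
   than Delta^2 neighbouring parts is joined to all of them by red edges, and
   the red degree of U in G/P is at most max(red degree in H/P, Delta^2).
   In G_red/P the red degree of U is exactly its number of neighbouring parts.
   Now fix a contraction sequence: its width for G_red exceeds Delta^2, hence
   so does its width for H, and then its widths for G and H coincide (a black
   edge of G/P stays black in H/P, so H never has larger width). *)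

Lemma bigmax_le_maxn (I : eqType) (r : seq I) (P : pred I) (F G : I -> nat) c :
  (forall i, i \in r -> P i -> F i <= maxn (G i) c) ->
  \max_(i <- r | P i) F i <= maxn (\max_(i <- r | P i) G i) c.
Proof.
move=> leFG; apply/bigmax_leqP_seq => i ri Pi; apply: leq_trans (leFG i ri Pi) _.
by rewrite geq_max leq_maxr leq_max (leq_bigmax_seq _ ri Pi).
Qed.

Section ContractionSequences.
Variable V : finType.

Lemma trivIset_singletons : trivIset (singletons V).
Proof.
apply/trivIsetP => _ _ /imsetP[x _ ->] /imsetP[y _ ->] neq_xy.
by rewrite disjoints1 in_set1; apply: contra neq_xy => /eqP ->.
Qed.

Lemma trivIset_merge_step (P Q : {set {set V}}) :
  trivIset P -> merge_step P Q -> trivIset Q.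
Proof.
move=> tP /existsP[U /andP[UP /existsP[W /andP[WP /andP[neqUW /eqP ->]]]]].
have sub_rest : P :\ U :\ W \subset P.
  exact: subset_trans (subD1set _ _) (subD1set _ _).
rewrite setUC; apply: trivIsetU; [exact: trivIset1 | exact: trivIsetS sub_rest tP |].
rewrite /cover big_set1; apply: bigcup_disjoint => B.
rewrite !inE => /and3P[neqBW neqBU BP].
by rewrite -setI_eq0 setIUl setU_eq0 !setI_eq0 !(trivIsetP tP) // eq_sym.
Qed.

Lemma contraction_seq_trivIset (t : #|V|.-tuple {set {set V}}) P :
  contraction_seq t -> P \in tval t -> trivIset P.
Proof.
rewrite /contraction_seq; case: t => -[|P0 s] //= _ /andP[/eqP eP0 merges].
have : trivIset P0 by rewrite eP0; exact: trivIset_singletons.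
elim: s P0 merges {eP0} => [|Q s IHs] P0 /=; first by move=> _ ? /[!inE] /eqP ->.
case/andP=> mergeQ merges tP0; rewrite inE => /predU1P[-> //|].
exact: IHs Q merges (trivIset_merge_step tP0 mergeQ).
Qed.

Lemma seq_width_le_maxn (bl1 rd1 bl2 rd2 : rel V) c t :
  contraction_seq t ->
  (forall P U, trivIset P -> red_deg bl1 rd1 P U <= maxn (red_deg bl2 rd2 P U) c) ->
  seq_width bl1 rd1 t <= maxn (seq_width bl2 rd2 t) c.
Proof.
move=> ct le_red_deg; apply: bigmax_le_maxn => P Pt _.
by apply: bigmax_le_maxn => U _ _; apply/le_red_deg/(contraction_seq_trivIset ct).
Qed.

End ContractionSequences.

Section Trigraph.
Variable V : finType.
Variables bl rd : rel V.

Local Notation adjG := (adj bl rd).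
Local Notation Delta := (Delta bl rd).
Local Notation rbl := (red_bl bl rd).
Local Notation rrd := (red_rd bl rd).
Local Notation ubl := (und_bl bl rd).
Local Notation urd := (und_rd bl rd).

Definition nbr_parts (P : {set {set V}}) (U : {set V}) : {set {set V}} :=
  [set W in P | (W != U) && ~~ non_adj bl rd U W].

Lemma non_adj_und U W : non_adj ubl urd U W = non_adj bl rd U W.
Proof.
by apply: eq_forallb_in => u _; apply: eq_forallb_in => w _; rewrite /adj /und_rd orbF.
Qed.

Lemma all_black_und U W : all_black bl rd U W -> all_black ubl urd U W.
Proof.
move=> /forall_inP blUW; apply/forall_inP => u uU; apply/forall_inP => w wW.
by rewrite /und_bl /adj (forall_inP (blUW u uU) w wW).
Qed.

Lemma red_part_red U W : red_part rbl rrd U W = ~~ non_adj bl rd U W.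
Proof.
rewrite /red_part -[non_adj rbl rrd U W]/(non_adj bl rd U W) andbC.
case: (boolP (non_adj bl rd U W)) => //=.
case/forall_inPn => u uU /forall_inPn[w wW _].
by apply/forall_inPn; exists u => //; apply/forall_inPn; exists w.
Qed.

Lemma red_deg_red P U : red_deg rbl rrd P U = #|nbr_parts P U|.
Proof. by apply: eq_card => W; rewrite !inE red_part_red. Qed.

Lemma red_deg_le_nbr P U : red_deg bl rd P U <= #|nbr_parts P U|.
Proof.
by apply/subset_leq_card/subsetP => W; rewrite !inE => /and3P[-> -> /andP[]].
Qed.

Lemma red_deg_und_le P U : red_deg ubl urd P U <= red_deg bl rd P U.
Proof.
apply/subset_leq_card/subsetP => W; rewrite !inE => /and3P[-> -> /andP[nblW]].
by rewrite non_adj_und /red_part => ->; rewrite andbT (contra (@all_black_und U W)).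
Qed.

Lemma red_deg_und_nbr P U :
  (forall W, W \in nbr_parts P U -> ~~ all_black ubl urd U W) ->
  red_deg ubl urd P U = #|nbr_parts P U|.
Proof.
move=> no_complete; apply: eq_card => W; rewrite !inE /red_part non_adj_und.
have := no_complete W; rewrite !inE.
case: (W \in P) (W != U) (non_adj bl rd U W) => [] [] [] //=.
all: rewrite ?andbF ?andbT //.
by move/(_ isT).
Qed.

Lemma card_adj_le_Delta x : #|[set y | adjG x y]| <= Delta.
Proof. exact: (leq_bigmax (F := fun x => #|[set y | adjG x y]|)). Qed.

Lemma card_nbr_parts_le P U : trivIset P -> #|nbr_parts P U| <= #|U| * Delta.
Proof.
move=> tP; pose nbhds := [set [set y | adjG u y] | u in U].
have sub_blocks : nbr_parts P U \subset pblock P @: cover nbhds.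
  apply/subsetP => W; rewrite inE => /and3P[WP _ /forall_inPn[u uU]].
  case/forall_inPn => w wW /negbNE adj_uw; apply/imsetP; exists w.
    by apply/bigcupP; exists [set y | adjG u y]; [apply: imset_f | rewrite inE].
  by rewrite (def_pblock tP WP wW).
apply: leq_trans (subset_leq_card sub_blocks) _.
apply: leq_trans (leq_imset_card _ _) _.
apply: leq_trans (leq_card_cover nbhds).1 _.
apply: leq_trans (_ : \sum_(B in nbhds) Delta <= _).
  by apply: leq_sum => _ /imsetP[u _ ->]; exact: card_adj_le_Delta.
by rewrite sum_nat_const leq_mul2r leq_imset_card orbT.
Qed.

Hypothesis adj_sym : symmetric adjG.

Lemma card_nbr_parts_complete P U W :
  trivIset P -> W \in nbr_parts P U -> all_black ubl urd U W ->
  #|nbr_parts P U| <= Delta ^ 2.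
Proof.
move=> tP; rewrite inE => /and3P[_ _ /forall_inPn[u _ /forall_inPn[w wW _]]].
move=> completeUW.
have U_nbhd : U \subset [set y | adjG w y].
  apply/subsetP => v vU; rewrite inE adj_sym.
  exact: forall_inP (forall_inP completeUW v vU) w wW.
apply: leq_trans (card_nbr_parts_le U tP) _.
rewrite expnS expn1 leq_mul2r.
by rewrite (leq_trans (subset_leq_card U_nbhd)) ?card_adj_le_Delta ?orbT.
Qed.

Lemma card_nbr_parts_le_maxn P U : trivIset P ->
  #|nbr_parts P U| <= maxn (red_deg ubl urd P U) (Delta ^ 2).
Proof.
move=> tP; case: (boolP [exists W in nbr_parts P U, all_black ubl urd U W]).
  case/exists_inP => W nbrW completeUW.
  by rewrite leq_max (card_nbr_parts_complete tP nbrW completeUW) orbT.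
by move/exists_inPn => no_complete; rewrite red_deg_und_nbr // leq_maxl.
Qed.

Lemma red_deg_le_maxn P U : trivIset P ->
  red_deg bl rd P U <= maxn (red_deg ubl urd P U) (Delta ^ 2).
Proof.
by move=> tP; apply: leq_trans (red_deg_le_nbr P U) (card_nbr_parts_le_maxn U tP).
Qed.

Lemma red_deg_red_le_maxn P U : trivIset P ->
  red_deg rbl rrd P U <= maxn (red_deg ubl urd P U) (Delta ^ 2).
Proof. by rewrite red_deg_red; exact: card_nbr_parts_le_maxn. Qed.

Lemma seq_width_und_eq (t : #|V|.-tuple {set {set V}}) :
  contraction_seq t -> Delta ^ 2 < seq_width rbl rrd t ->
  seq_width bl rd t = seq_width ubl urd t.
Proof.
move=> ct wide_red.
have wide_und : Delta ^ 2 < seq_width ubl urd t.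
  have := leq_trans wide_red (seq_width_le_maxn ct red_deg_red_le_maxn).
  by rewrite leq_max ltnn orbF.
apply/eqP; rewrite eqn_leq; apply/andP; split.
  by rewrite -(maxn_idPl (ltnW wide_und)) (seq_width_le_maxn ct red_deg_le_maxn).
rewrite -[seq_width bl rd t]maxn0; apply: seq_width_le_maxn ct _ => P U _.
by rewrite maxn0 red_deg_und_le.
Qed.

Lemma tww_und_eq : Delta ^ 2 < stww bl rd -> tww bl rd = tww ubl urd.
Proof.
move=> wide; apply: eq_bigr => t ct; apply: (seq_width_und_eq ct).
by apply: leq_trans wide _; rewrite /stww /tww; exact: (@bigmin_le_cond _ nat).
Qed.

End Trigraph.

Theorem mainTheorem11 (V : finType) (bl rd : rel V) :
  trigraph bl rd ->
  Delta bl rd ^ 2 < stww bl rd ->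
  tww bl rd = tww (und_bl bl rd) (und_rd bl rd).
Proof.
case=> sym_bl sym_rd _ _ _; apply: tww_und_eq => x y.
by rewrite /adj sym_bl sym_rd.
Qed.
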